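(* On the category $\mathrm{Top}$ of topological spaces the Grothendieck topologies $T_{nop},T_{op},T_{slh},T_{sutsu},T_{sop},T_{lsplit},T_{sur}$ satisfy: $T_{nop}\subset T_{op}$; $T_{op}\prec T_{slh}$ and $T_{op}\sim T_{slh}$; $T_{slh}\subset T_{sutsu}$ and $T_{slh}\sim T_{sutsu}$; $T_{sutsu}\subset T_{lsplit}$ and $T_{sutsu}\sim T_{lsplit}$; $T_{lsplit}\subset T_{sur}$; $T_{sutsu}\subset T_{sop}\subset T_{sur}$. Moreover, each of these topologies is either singleton or singletonizable, $T_{op}$ is superextensive, and all of them except $T_{sur}$ are subcanonical and local.
   Context: Coverings of the Grothendieck topologies on $\mathrm{Top}$: $T_{op}$ — families $(\pi_i:U_i\hookrightarrow X)$ of topological embeddings whose images form an open cover of $X$; $T_{nop}$ — as $T_{op}$ but the open cover is numerable (admits a subordinate partition of unity); $T_{slh}$ — single surjective local homeomorphisms; $T_{sutsu}$ — single surjective continuous $f:X\to Y$ such that each $x\in X$ has an open neighbourhood $U$ of $f(x)$ with a section $\sigma:U\to X$, $\sigma(f(x))=x$; $T_{sop}$ — single surjective open maps; $T_{lsplit}$ — single continuous $f:X\to Y$ such that each $y\in Y$ has an open neighbourhood with a continuous section; $T_{sur}$ — single surjective continuous maps. A Grothendieck topology is singleton if all coverings consist of one morphism, singletonizable if for each covering $(U_i\to X)_i$ the coproduct $\coprod U_i$ exists. On an extensive category (such as $\mathrm{Top}$), $T$ is superextensive if every family of coproduct injections $(X_i\to\coprod_iX_i)$ of an existing coproduct is a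 $T$-covering. A morphism is universal if its pullback along every morphism exists; $\pi:Y\to X$ is $T$-locally split if there is a $T$-covering $(\pi_i:U_i\to X)$ and $\rho_i:U_i\to Y$ with $\pi\circ\rho_i=\pi_i$. $T_1\prec T_2$: every universal $T_1$-locally split morphism is $T_2$-locally split; $\sim$: $\prec$ both ways; $T_1\subset T_2$: every $T_1$-covering is a $T_2$-covering. A universally effective epimorphism is a universal morphism $\pi:Y\to X$ for which $Y\times_XY\rightrightarrows Y\to X$ is a coequalizer and all of whose pullbacks have the same property; the canonical topology consists of these (as singleton coverings); $T$ is subcanonical if $T\prec$ canonical topology. $T$ is local if whenever in a pullback square $V\to Y$, $f:V\to U$, $g:U\to X$, $\pi:Y\to X$ the maps $f$ and $g$ are universal $T$-locally split, then $\pi$ is universal $T$-locally split. *)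

(* the category Top is modelled by
   objects  = MathComp-Analysis [topologicalType]s,
   morphisms = continuous functions between their carriers. *)
From HB Require Import structures.
From mathcomp Require Import all_boot all_order all_algebra.
From mathcomp Require Import all_classical all_reals all_analysis.
From mathcomp Require Import Rstruct Rstruct_topology.

Set Implicit Arguments.
Unset Strict Implicit.
Unset Printing Implicit Defensive.

Import GRing.Theory Num.Theory.
Local Open Scope classical_set_scope.
Local Open Scope ring_scope.

Record cov_family (X : topologicalType) := Family {
  fam_idx : Type;
  fam_obj : fam_idx -> topologicalType;
  fam_map : forall i, fam_obj i -> X }.
Arguments fam_idx {X} f : rename.
Arguments fam_obj {X} f i : rename.
Arguments fam_map {X} f i _ : rename.

Definition topology_on_Top := forall X : topologicalType, cov_family X -> Prop.

Definition single_with (X : topologicalType) (F : cov_family X)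
  (P : forall U : topologicalType, (U -> X) -> Prop) : Prop :=
  exists i0 : fam_idx F, (forall i, i = i0) /\ P (fam_obj F i0) (fam_map F i0).

Definition single (X : topologicalType) (F : cov_family X) : Prop :=
  exists i0 : fam_idx F, forall i, i = i0.

Definition surj (X Y : topologicalType) (f : X -> Y) : Prop :=
  forall y, exists x, f x = y.

Definition embedding (U X : topologicalType) (f : U -> X) : Prop :=
  [/\ continuous f, injective f &
      forall A : set U, open A -> exists B : set X, open B /\ A = f @^-1` B].

Definition T_op : topology_on_Top := fun X F =>
  [/\ forall i, embedding (fam_map F i),
      forall i, open (range (fam_map F i)) &
      forall x : X, exists i, range (fam_map F i) x].

(* the cover (V_i)_{i in I} of X admits a subordinate (locally finite)
   partition of unity *)
Definition numerable (X : topologicalType) (I : Type) (V : I -> set X) : Prop :=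
  exists (J : Type) (phi : J -> X -> Rdefinitions.R),
  [/\ forall j, continuous (phi j),
      forall j x, 0 <= phi j x <= 1,
      forall j, exists i, closure [set x | phi j x != 0] `<=` V i,
      forall x : X, exists N : set X, nbhs x N /\
         exists s : seq J, forall j, ~ List.In j s ->
            N `&` closure [set y | phi j y != 0] = set0 &
      forall x : X, exists s : seq J,
         [/\ List.NoDup s, (forall j, phi j x != 0 -> List.In j s) &
             \sum_(j <- s) phi j x = 1]].

Definition T_nop : topology_on_Top := fun X F =>
  T_op F /\ numerable (fun i => range (fam_map F i)).

Definition local_homeo (U X : topologicalType) (f : U -> X) : Prop :=
  continuous f /\
  forall u : U, exists W : set U,
    [/\ open W, W u, open (f @` W) &
        exists g : X -> U, [/\ {within f @` W, continuous g},
             forall w, W w -> g (f w) = w &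
             forall x, (f @` W) x -> f (g x) = x]].

Definition T_slh : topology_on_Top := fun X F =>
  single_with F (fun U f => surj f /\ local_homeo f).

Definition sutsu (U X : topologicalType) (f : U -> X) : Prop :=
  [/\ continuous f, surj f &
      forall u : U, exists W : set X, [/\ open W, W (f u) &
        exists sigma : X -> U, [/\ {within W, continuous sigma},
           forall x, W x -> f (sigma x) = x & sigma (f u) = u]]].

Definition T_sutsu : topology_on_Top := fun X F => single_with F (fun U f => sutsu f).

Definition T_sop : topology_on_Top := fun X F =>
  single_with F (fun U f =>
    [/\ continuous f, surj f & forall A : set U, open A -> open (f @` A)]).

Definition T_lsplit : topology_on_Top := fun X F =>
  single_with F (fun U f =>
    continuous f /\
    forall x : X, exists W : set X, [/\ open W, W x &
       exists sigma : X -> U, {within W, continuous sigma} /\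
          forall x', W x' -> f (sigma x') = x']).

Definition T_sur : topology_on_Top := fun X F =>
  single_with F (fun U f => continuous f /\ surj f).

Definition is_pullback (Z Y X P : topologicalType) (f : Z -> X) (pi : Y -> X)
  (p1 : P -> Z) (p2 : P -> Y) : Prop :=
  [/\ continuous p1, continuous p2, f \o p1 = pi \o p2 &
      forall (W : topologicalType) (a : W -> Z) (b : W -> Y),
        continuous a -> continuous b -> f \o a = pi \o b ->
        exists h : W -> P, [/\ continuous h, p1 \o h = a, p2 \o h = b &
          forall h' : W -> P, continuous h' -> p1 \o h' = a -> p2 \o h' = b ->
            h' = h]].

Definition universal (Y X : topologicalType) (pi : Y -> X) : Prop :=
  forall (Z : topologicalType) (f : Z -> X), continuous f ->
  exists (P : topologicalType) (p1 : P -> Z) (p2 : P -> Y), is_pullback f pi p1 p2.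

Definition locally_split (T : topology_on_Top) (Y X : topologicalType)
  (pi : Y -> X) : Prop :=
  exists F : cov_family X, T X F /\
  exists rho : forall i, fam_obj F i -> Y,
    forall i, continuous (rho i) /\ pi \o rho i = fam_map F i.

Definition subtop (T1 T2 : topology_on_Top) : Prop :=
  forall (X : topologicalType) (F : cov_family X), T1 X F -> T2 X F.

Definition prec (T1 T2 : topology_on_Top) : Prop :=
  forall (X Y : topologicalType) (pi : Y -> X), continuous pi ->
    universal pi -> locally_split T1 pi -> locally_split T2 pi.

Definition simtop (T1 T2 : topology_on_Top) : Prop := prec T1 T2 /\ prec T2 T1.

Definition is_coequalizer (P Y X : topologicalType) (p1 p2 : P -> Y) (q : Y -> X)
  : Prop :=
  [/\ continuous q, q \o p1 = q \o p2 &
      forall (W : topologicalType) (g : Y -> W), continuous g -> g \o p1 = g \o p2 ->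
        exists h : X -> W, [/\ continuous h, h \o q = g &
          forall h' : X -> W, continuous h' -> h' \o q = g -> h' = h]].

Definition effective_epi (Y X : topologicalType) (pi : Y -> X) : Prop :=
  forall (P : topologicalType) (p1 p2 : P -> Y),
    is_pullback pi pi p1 p2 -> is_coequalizer p1 p2 pi.

Definition univ_eff_epi (Y X : topologicalType) (pi : Y -> X) : Prop :=
  [/\ continuous pi, universal pi, effective_epi pi &
      forall (Z P : topologicalType) (f : Z -> X) (p1 : P -> Z) (p2 : P -> Y),
        continuous f -> is_pullback f pi p1 p2 -> effective_epi p1].

Definition T_can : topology_on_Top := fun X F => single_with F (fun U f => univ_eff_epi f).

Definition subcanonical (T : topology_on_Top) : Prop := prec T T_can.

Definition singleton_top (T : topology_on_Top) : Prop :=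
  forall (X : topologicalType) (F : cov_family X), T X F -> single F.

Definition is_coproduct (I : Type) (U : I -> topologicalType) (C : topologicalType)
  (iota : forall i, U i -> C) : Prop :=
  (forall i, continuous (iota i)) /\
  forall (W : topologicalType) (g : forall i, U i -> W), (forall i, continuous (g i)) ->
    exists h : C -> W, [/\ continuous h, forall i, h \o iota i = g i &
      forall h' : C -> W, continuous h' -> (forall i, h' \o iota i = g i) -> h' = h].

Arguments is_coproduct {I} U C iota.

Definition singletonizable (T : topology_on_Top) : Prop :=
  forall (X : topologicalType) (F : cov_family X), T X F ->
    exists (C : topologicalType) (iota : forall i, fam_obj F i -> C),
      is_coproduct (fam_obj F) C iota.

Definition superextensive (T : topology_on_Top) : Prop :=
  forall (I : Type) (U : I -> topologicalType) (C : topologicalType)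
         (iota : forall i, U i -> C),
    is_coproduct U C iota -> T C (@Family C I U iota).

Definition local_top (T : topology_on_Top) : Prop :=
  forall (X Y U V : topologicalType) (pi : Y -> X) (g : U -> X)
         (f : V -> U) (q : V -> Y),
    continuous pi -> continuous g -> is_pullback g pi f q ->
    universal f -> locally_split T f ->
    universal g -> locally_split T g ->
    universal pi /\ locally_split T pi.

(** In Top every pullback (a subspace of the product) and every coproduct
   (the disjoint sum) exists, so every map is universal and every topology is
   singletonizable.  For T_op, T_slh, T_sutsu and T_lsplit a continuous map is
   locally split exactly when it has continuous sections on a neighbourhood of
   each point: a T_op-splitting extends to sections over the open pieces of
   the cover, and conversely an open cover carrying sections gives a surjective
   local homeomorphism out of its disjoint sum.  Local sections compose along
   pullback squares, which gives locality; for T_nop one multiplies the two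
   partitions of unity, and for T_sop one uses that open surjections are stable
   under pullback and composition.  A map through which an open surjection
   factors is a surjective quotient map, hence an effective epimorphism; as
   open surjections are stable under pullback, so is this factorisation, which
   gives subcanonicity. *)

From Pilot Require Import Defs.
From HB Require Import structures.
From mathcomp Require Import all_boot all_order all_algebra.
From mathcomp Require Import all_classical all_reals all_analysis.
From mathcomp Require Import Rstruct Rstruct_topology.

Set Implicit Arguments.
Unset Strict Implicit.
Unset Printing Implicit Defensive.

Import GRing.Theory Num.Theory.
Local Open Scope classical_set_scope.
Local Open Scope ring_scope.

Section set_type_topology.
Context {X : topologicalType} (A : set X).

Lemma set_val_continuous : continuous (set_val : A -> X).
Proof. exact: initial_continuous. Qed.

Lemma set_val_inj : injective (set_val : A -> X).
Proof. by rewrite set_valE; exact: val_inj. Qed.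

Lemma range_set_val : range (set_val : A -> X) = A.
Proof.
rewrite set_valE; apply/seteqP; split => [x [v _ <-]|x Ax]; first exact: set_valP.
by exists (exist _ x (mem_set Ax)).
Qed.

Lemma set_val_embedding : embedding (set_val : A -> X).
Proof.
split; [exact: set_val_continuous|exact: set_val_inj|].
by move=> _ [B oB <-]; exists B.
Qed.

Lemma continuous_set_type {Z : topologicalType} (h : Z -> A) :
  continuous (set_val \o h) -> continuous h.
Proof.
move=> ch; apply/continuousP => _ [B oB <-].
by move/continuousP: ch; apply.
Qed.

Lemma continuous_in_set_val {Y : topologicalType} (s : X -> Y) :
  open A -> {in A, continuous s} -> continuous (s \o (set_val : A -> X)).
Proof.
move=> oA cs; apply/subspace_sigL_continuousP.
by rewrite continuous_open_subspace.
Qed.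

End set_type_topology.

Section canonical_pullback.
Context {Z Y X : topologicalType} (f : Z -> X) (g : Y -> X).

Definition pullback : topologicalType := [set p : Z * Y | f p.1 = g p.2].

Definition pullback_fst (p : pullback) : Z := (set_val p).1.
Definition pullback_snd (p : pullback) : Y := (set_val p).2.

Definition pullback_pair (z : Z) (y : Y) (e : f z = g y) : pullback :=
  exist _ (z, y) (mem_set (e : [set p : Z * Y | f p.1 = g p.2] (z, y))).

Lemma pullback_fst_continuous : continuous pullback_fst.
Proof.
move=> p; apply: continuous_comp; first exact: set_val_continuous.
exact: cvg_fst.
Qed.

Lemma pullback_snd_continuous : continuous pullback_snd.
Proof.
move=> p; apply: continuous_comp; first exact: set_val_continuous.
exact: cvg_snd.
Qed.

Lemma pullback_sq (p : pullback) : f (pullback_fst p) = g (pullback_snd p).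
Proof. exact: set_valP p. Qed.

Lemma pullback_pair_fst z y (e : f z = g y) : pullback_fst (pullback_pair e) = z.
Proof. by rewrite /pullback_fst set_valE. Qed.

Lemma pullback_pair_snd z y (e : f z = g y) : pullback_snd (pullback_pair e) = y.
Proof. by rewrite /pullback_snd set_valE. Qed.

Lemma pullback_ext (p q : pullback) :
  pullback_fst p = pullback_fst q -> pullback_snd p = pullback_snd q -> p = q.
Proof.
rewrite /pullback_fst /pullback_snd => e1 e2; apply: set_val_inj.
by move: e1 e2; case: (set_val p) => ? ?; case: (set_val q) => ? ? /= -> ->.
Qed.

Lemma pullback_is_pullback : is_pullback f g pullback_fst pullback_snd.
Proof.
split; [exact: pullback_fst_continuous|exact: pullback_snd_continuous| |].
  by apply/funext => p; exact: pullback_sq.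
move=> W a b ca cb /(congr1 (fun h => h _)) /= e.
exists (fun w => pullback_pair (e w)); split.
- apply: continuous_set_type; rewrite set_valE => w.
  by apply: cvg_pair; [exact: ca|exact: cb].
- by apply/funext => w /=; rewrite pullback_pair_fst.
- by apply/funext => w /=; rewrite pullback_pair_snd.
- move=> h _ h1 h2; apply/funext => w; apply: pullback_ext.
    by rewrite pullback_pair_fst -h1.
  by rewrite pullback_pair_snd -h2.
Qed.

End canonical_pullback.

Arguments pullback_fst {Z Y X} f g p.
Arguments pullback_snd {Z Y X} f g p.

Lemma universalT {Y X : topologicalType} (pi : Y -> X) : universal pi.
Proof.
move=> Z f _; exists (pullback f pi), (pullback_fst f pi), (pullback_snd f pi).
exact: pullback_is_pullback.
Qed.

Lemma pullback_point {Z Y X P : topologicalType} (f : Z -> X) (g : Y -> X)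
    (p1 : P -> Z) (p2 : P -> Y) :
  is_pullback f g p1 p2 -> forall z y, f z = g y -> exists p, p1 p = z /\ p2 p = y.
Proof.
move=> [_ _ _ univ] z y e.
have [|h [_ h1 h2 _]] :=
  univ Z (fun=> z) (fun=> y) (@cst_continuous Z Z z) (@cst_continuous Z Y y).
  by apply/funext.
exists (h z); split; first exact: (congr1 (fun k => k z) h1).
exact: (congr1 (fun k => k z) h2).
Qed.

Section coproduct.
Context {I : Type} (U : I -> topologicalType).

Definition coprod : topologicalType := {i : {classic I} & U i}.

Definition coprod_inj (i : I) : U i -> coprod := existT _ i.
Arguments coprod_inj : clear implicits.

Lemma coprod_inj_continuous i : continuous (coprod_inj i).
Proof. exact: (@existT_continuous {classic I} U i). Qed.

Lemma coprod_inj_inj i : injective (coprod_inj i).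
Proof. by move=> a b; exact: (@eq_from_Tagged {classic I} U i). Qed.

Lemma coprod_inj_open i (A : set (U i)) : open A -> open (coprod_inj i @` A).
Proof. exact: (@existT_open_map {classic I} U i). Qed.

Definition coprod_case {W : Type} (g : forall i, U i -> W) (p : coprod) : W :=
  g (projT1 p) (projT2 p).

Lemma coprod_case_continuous {W : topologicalType} (g : forall i, U i -> W) :
  (forall i, continuous (g i)) -> continuous (coprod_case g).
Proof. exact: (@sigT_continuous {classic I} U W g). Qed.

Lemma coprod_is_coproduct : is_coproduct U coprod coprod_inj.
Proof.
split; first exact: coprod_inj_continuous.
move=> W g cg; exists (coprod_case g); split => //.
  exact: coprod_case_continuous.
by move=> h _ e; apply/funext => -[i x]; exact: (congr1 (fun k => k x) (e i)).
Qed.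

End coproduct.

Arguments coprod_inj {I} U i.

Lemma coproduct_unique {I : Type} (U : I -> topologicalType) (C C' : topologicalType)
    (iota : forall i, U i -> C) (iota' : forall i, U i -> C') :
  is_coproduct U C iota -> is_coproduct U C' iota' ->
  exists (h : C -> C') (k : C' -> C), [/\ continuous h, cancel h k,
    forall i, h \o iota i = iota' i & forall i, k \o iota' i = iota i].
Proof.
move=> [ci univC] [ci' univC'].
have [h [ch hi _]] := univC C' iota' ci'.
have [k [ck ki _]] := univC' C iota ci.
have [idC [_ _ uniq]] := univC C iota ci.
have khE : k \o h = id.
  rewrite [LHS]uniq; last by move=> i; rewrite -compA hi ki.
    by apply/esym/uniq => // x; exact: cvg_id.
  by move=> x; apply: continuous_comp; [exact: ch|exact: ck].
by exists h, k; split => // x; rewrite -[RHS]/(id x) -khE.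
Qed.

Lemma singletonizableT (T : topology_on_Top) : singletonizable T.
Proof.
move=> X F _; exists (coprod (fam_obj F)), (coprod_inj (fam_obj F)).
exact: coprod_is_coproduct.
Qed.

Lemma superextensive_op : superextensive T_op.
Proof.
move=> I U C iota coprodC.
have [h [k [ch hK hi ki]]] := coproduct_unique coprodC (coprod_is_coproduct U).
have hiE i a : h (iota i a) = coprod_inj U i a := congr1 (fun m => m a) (hi i).
have kiE i a : k (coprod_inj U i a) = iota i a := congr1 (fun m => m a) (ki i).
have [ci _] := coprodC.
split => [i|i|x] /=.
- split; first exact: ci.
    by move=> a b eab; apply: (@coprod_inj_inj _ U i); rewrite -!hiE eab.
  move=> A oA; exists (h @^-1` (coprod_inj U i @` A)); split.
    by move/continuousP: ch; apply; exact: coprod_inj_open.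
  apply/seteqP; split => [a Aa|a]; first by rewrite /= hiE; exists a.
  by rewrite /= hiE => -[b Ab /(@coprod_inj_inj _ U i) <-].
- rewrite (_ : range (iota i) = h @^-1` range (coprod_inj U i)).
    by move/continuousP: ch; apply; exact: coprod_inj_open openT.
  apply/seteqP; split => [_ [a _ <-]|x [a _ ea]]; first by rewrite /= hiE; exists a.
  by exists a => //; rewrite -kiE ea hK.
- by move: (hK x); case: (h x) => j a <-; exists j, a; rewrite ?kiE.
Qed.

Lemma single_withS {X : topologicalType} (F : cov_family X)
    (P Q : forall U : topologicalType, (U -> X) -> Prop) :
  (forall U f, P U f -> Q U f) -> single_with F P -> single_with F Q.
Proof. by move=> PQ [i0 [i0E Pi0]]; exists i0; split => //; exact: PQ. Qed.

Lemma subtop_nop_op : subtop T_nop T_op.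
Proof. by move=> X F []. Qed.

Lemma subtop_slh_sutsu : subtop T_slh T_sutsu.
Proof.
move=> X F; apply: single_withS => U f [sf [cf lh]]; split => // u.
have [W [oW Wu oWf [g [cg gK fK]]]] := lh u.
exists (f @` W); split; [done|by exists u|].
by exists g; split => //; exact: gK.
Qed.

Lemma subtop_sutsu_lsplit : subtop T_sutsu T_lsplit.
Proof.
move=> X F; apply: single_withS => U f [cf sf sec]; split => // x.
have [u <-] := sf x; have [W [oW Wfu [s [cs sK _]]]] := sec u.
by exists W; split => //; exists s.
Qed.

Lemma subtop_lsplit_sur : subtop T_lsplit T_sur.
Proof.
move=> X F; apply: single_withS => U f [cf sec]; split => // x.
by have [W [_ Wx [s [_ sK]]]] := sec x; exists (s x); exact: sK.
Qed.

Lemma subtop_sutsu_sop : subtop T_sutsu T_sop.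
Proof.
move=> X F; apply: single_withS => U f [cf sf sec]; split => // A oA.
rewrite openE => _ [u Au <-].
have [W [oW Wfu [s [cs sK su]]]] := sec u.
have cs_fu : {for f u, continuous s}.
  by move: cs; rewrite continuous_open_subspace // => /(_ (f u)); apply; rewrite inE.
have sA : nbhs (f u) (s @^-1` A) by apply: cs_fu; rewrite su; exact: open_nbhs_nbhs.
apply: filterS (filterI sA (open_nbhs_nbhs (conj oW Wfu))) => x [/= Asx Wx].
by exists (s x) => //; exact: sK.
Qed.

Lemma subtop_sop_sur : subtop T_sop T_sur.
Proof. by move=> X F; apply: single_withS => U f []. Qed.

Lemma locally_splitS (T1 T2 : topology_on_Top) {X Y : topologicalType} (pi : Y -> X) :
  subtop T1 T2 -> locally_split T1 pi -> locally_split T2 pi.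
Proof. by move=> T12 [F [TF rho]]; exists F; split => //; exact: T12. Qed.

Definition singleton_family {X U : topologicalType} (f : U -> X) : cov_family X :=
  @Family X unit (fun=> U) (fun=> f).

Lemma single_with_singleton_family {X U : topologicalType} (f : U -> X)
    (P : forall U : topologicalType, (U -> X) -> Prop) :
  P U f -> single_with (singleton_family f) P.
Proof. by move=> Pf; exists tt; split => // -[]. Qed.

Lemma locally_split_singleton (T : topology_on_Top) {X Y U : topologicalType}
    (pi : Y -> X) (f : U -> X) (rho : U -> Y) :
  T X (singleton_family f) -> continuous rho -> pi \o rho = f -> locally_split T pi.
Proof.
by move=> Tf crho piK; exists (singleton_family f); split => //; exists (fun=> rho).
Qed.

Definition has_local_sections {X Y : topologicalType} (pi : Y -> X) : Prop :=
  forall x, exists (W : set X) (s : X -> Y),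
    [/\ open W, W x, {in W, continuous s} & forall x', W x' -> pi (s x') = x'].

Definition section_cover {X Y : topologicalType} (pi : Y -> X) {I : Type}
    (V : I -> set X) (s : I -> X -> Y) : Prop :=
  [/\ forall i, open (V i), forall x, exists i, V i x,
      forall i, {in V i, continuous (s i)} & forall i x, V i x -> pi (s i x) = x].

Section local_sections.
Context {X Y : topologicalType} (pi : Y -> X).

Lemma section_cover_local_sections {I : Type} (V : I -> set X) (s : I -> X -> Y) :
  section_cover pi V s -> has_local_sections pi.
Proof.
move=> [oV cV cs sK] x; have [i Vix] := cV x.
by exists (V i), (s i); split => //; exact: sK.
Qed.

Lemma local_sections_cover :
  has_local_sections pi ->
  exists (V : X -> set X) (s : X -> X -> Y), section_cover pi V s.
Proof.
move=> ls; have /choice [p pP] : forall x, exists p : set X * (X -> Y),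
    [/\ open p.1, p.1 x, {in p.1, continuous p.2} &
         forall x', p.1 x' -> pi (p.2 x') = x'].
  by move=> x; have [W [s ?]] := ls x; exists (W, s).
exists (fun x => (p x).1), (fun x => (p x).2).
by split => [x|x|x|x]; [case: (pP x)|exists x; case: (pP x)|case: (pP x)|case: (pP x)].
Qed.

Definition subspace_family {I : Type} (V : I -> set X) : cov_family X :=
  @Family X I (fun i => (V i : topologicalType)) (fun i => set_val).

Lemma op_subspace_family {I : Type} (V : I -> set X) :
  (forall i, open (V i)) -> (forall x, exists i, V i x) -> T_op (subspace_family V).
Proof.
move=> oV cV; split => [i|i|x]; first exact: set_val_embedding.
  by change (open (range (set_val : V i -> X))); rewrite range_set_val.
have [i Vix] := cV x; exists i.
by change (range (set_val : V i -> X) x); rewrite range_set_val.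
Qed.

Lemma section_cover_split {I : Type} (V : I -> set X) (s : I -> X -> Y) :
  section_cover pi V s -> exists rho : forall i, fam_obj (subspace_family V) i -> Y,
    forall i, continuous (rho i) /\ pi \o rho i = fam_map (subspace_family V) i.
Proof.
move=> [oV _ cs sK]; exists (fun i => s i \o set_val) => i; split.
  exact: continuous_in_set_val.
by apply/funext => v /=; apply: sK; exact: set_valP.
Qed.

Lemma op_split_of_section_cover {I : Type} (V : I -> set X) (s : I -> X -> Y) :
  section_cover pi V s -> locally_split T_op pi.
Proof.
move=> sc; have [oV cV _ _] := sc.
exists (subspace_family V); split; first exact: op_subspace_family.
exact: section_cover_split sc.
Qed.

End local_sections.

Lemma embedding_extension {U X Y : topologicalType} (e : U -> X) (rho : U -> Y)
    (d : X -> Y) :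
  embedding e -> open (range e) -> continuous rho ->
  exists s : X -> Y, (forall a, s (e a) = rho a) /\ {in range e, continuous s}.
Proof.
move=> [_ inj_e init_e] oe crho.
have /choice [s sE] : forall x, exists y, forall a, e a = x -> y = rho a.
  move=> x; have [[a <-]|nx] := pselect (exists a, e a = x).
    by exists (rho a) => a' /inj_e ->.
  by exists (d x) => a ea; case: nx; exists a.
have {}sE a : s (e a) = rho a by exact: sE.
exists s; split => // x; rewrite inE => -[a _ <-] N.
rewrite sE => /(crho a); rewrite nbhsE => -[A [oA Aa] AN].
have [B [oB AE]] := init_e A oA.
apply: (@filterS _ _ _ (B `&` range e)) => [y [By [a' _ ea']]|].
  by rewrite -ea' in By *; rewrite /= sE; apply: AN; rewrite AE.
apply: open_nbhs_nbhs; split; first exact: openI.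
by split; [rewrite AE in Aa|exists a].
Qed.

Lemma section_cover_of_op_split {X Y : topologicalType} (pi : Y -> X) (F : cov_family X)
    (rho : forall i, fam_obj F i -> Y) :
  T_op F -> (forall i, continuous (rho i) /\ pi \o rho i = fam_map F i) ->
  exists s, section_cover pi (fun i => range (fam_map F i)) s.
Proof.
move=> [emb opn cov] hrho.
have /choice [d _] : forall x : X, exists y : Y, True.
  by move=> x; have [i [a _ _]] := cov x; exists (rho i a).
have /choice [s sP] : forall i, exists s : X -> Y,
    (forall a, s (fam_map F i a) = rho i a) /\ {in range (fam_map F i), continuous s}.
  by move=> i; apply: embedding_extension d (emb i) (opn i) (hrho i).1.
exists s; split => // [i|i _ [a _ <-]]; first by case: (sP i).
by have [-> _] := sP i; have [_ /(congr1 (fun k => k a))] := hrho i.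
Qed.

Section cover_coproduct.
Context {X : topologicalType} {I : Type} (V : I -> set X).
Local Notation U := (fun i => (V i : topologicalType)).

Definition cover_coprod : topologicalType := coprod U.

Definition cover_coprod_map : cover_coprod -> X := coprod_case (fun i => set_val).

Lemma cover_coprod_mapE i (w : V i) : cover_coprod_map (coprod_inj U i w) = set_val w.
Proof. by []. Qed.

Lemma cover_coprod_map_surj : (forall x, exists i, V i x) -> Defs.surj cover_coprod_map.
Proof.
move=> cV x; have [i Vix] := cV x.
by exists (coprod_inj U i (exist _ x (mem_set Vix))); rewrite cover_coprod_mapE set_valE.
Qed.

Lemma local_homeo_cover_coprod_map :
  (forall i, open (V i)) -> local_homeo cover_coprod_map.
Proof.
move=> oV; split; first by apply: coprod_case_continuous => i; exact: set_val_continuous.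
case=> i v; set W := range (coprod_inj U i).
have WE : cover_coprod_map @` W = V i.
  apply/seteqP; split => [_ [_ [w _ <-] <-]|x Vx]; first exact: set_valP.
  exists (coprod_inj U i (exist _ x (mem_set Vx))).
    by exists (exist _ x (mem_set Vx)).
  by rewrite cover_coprod_mapE set_valE.
pose g x := if pselect (V i x) is left Vx
  then coprod_inj U i (exist _ x (mem_set Vx)) else coprod_inj U i v.
have gE (w : V i) : g (set_val w) = coprod_inj U i w.
  rewrite /g; case: pselect => [Vw|]; last by case; exact: set_valP.
  by congr coprod_inj; apply: set_val_inj; rewrite {1}set_valE.
exists W; rewrite WE; split; [exact: coprod_inj_open openT|by exists v|exact: oV|].
exists g; split.
- apply/subspace_sigL_continuousP.
  rewrite (_ : sigL (V i) g = coprod_inj U i); last by apply/funext => w; exact: gE.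
  exact: (@coprod_inj_continuous _ U i).
- by move=> _ [w _ <-]; exact: gE.
- by move=> x Vx; rewrite /g; case: pselect.
Qed.

End cover_coproduct.

Arguments cover_coprod_map {X I} V.

Lemma slh_split_of_section_cover {X Y : topologicalType} (pi : Y -> X) {I : Type}
    (V : I -> set X) (s : I -> X -> Y) :
  section_cover pi V s -> locally_split T_slh pi.
Proof.
move=> [oV cV cs sK].
apply: (@locally_split_singleton _ _ _ _ pi (cover_coprod_map V)
  (@coprod_case _ (fun i => (V i : topologicalType)) _ (fun i => s i \o set_val))).
- apply: single_with_singleton_family; split; first exact: cover_coprod_map_surj.
  exact: local_homeo_cover_coprod_map.
- by apply: coprod_case_continuous => i; exact: continuous_in_set_val.
- by apply/funext => -[i v]; apply: sK; exact: set_valP.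
Qed.

Lemma local_sections_of_lsplit {X Y : topologicalType} (pi : Y -> X) :
  locally_split T_lsplit pi -> has_local_sections pi.
Proof.
move=> [F [[i0 [_ [_ sec]]] [rho /(_ i0) [crho rhoK]]]] x.
have [W [oW Wx [s [cs sK]]]] := sec x.
exists W, (rho i0 \o s); split => //.
  move: cs; rewrite continuous_open_subspace // => cs y Wy.
  by apply: continuous_comp; [exact: cs|exact: crho].
by move=> y Wy; rewrite -[RHS](sK y Wy) -rhoK.
Qed.

Lemma lsplit_of_local_sections {X Y : topologicalType} (pi : Y -> X) :
  continuous pi -> has_local_sections pi -> locally_split T_lsplit pi.
Proof.
move=> cpi ls; apply: (@locally_split_singleton _ _ _ _ pi pi id) => // [|y].
  apply: single_with_singleton_family; split => // x.
  have [W [s [oW Wx cs sK]]] := ls x.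
  by exists W; split => //; exists s; rewrite continuous_open_subspace.
exact: cvg_id.
Qed.

Definition split_by_local_sections (T : topology_on_Top) : Prop :=
  forall (X Y : topologicalType) (pi : Y -> X), continuous pi ->
  locally_split T pi <-> has_local_sections pi.

Lemma lsplit_split_by_local_sections : split_by_local_sections T_lsplit.
Proof.
move=> X Y pi cpi; split; first exact: local_sections_of_lsplit.
exact: lsplit_of_local_sections.
Qed.

Lemma op_split_by_local_sections : split_by_local_sections T_op.
Proof.
move=> X Y pi _; split => [[F [TF [rho hrho]]]|/local_sections_cover [V [s sc]]].
  have [s sc] := section_cover_of_op_split TF hrho.
  exact: section_cover_local_sections sc.
exact: op_split_of_section_cover sc.
Qed.

Lemma slh_split_by_local_sections : split_by_local_sections T_slh.
Proof.
move=> X Y pi cpi; split => [|/local_sections_cover [V [s sc]]].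
  move=> /(locally_splitS subtop_slh_sutsu)/(locally_splitS subtop_sutsu_lsplit).
  exact: local_sections_of_lsplit.
exact: slh_split_of_section_cover sc.
Qed.

Lemma sutsu_split_by_local_sections : split_by_local_sections T_sutsu.
Proof.
move=> X Y pi cpi; split => [/(locally_splitS subtop_sutsu_lsplit)|ls].
  exact: local_sections_of_lsplit.
by apply: (locally_splitS subtop_slh_sutsu); apply/slh_split_by_local_sections.
Qed.

Lemma simtop_split_by_local_sections (T1 T2 : topology_on_Top) :
  split_by_local_sections T1 -> split_by_local_sections T2 -> simtop T1 T2.
Proof.
move=> h1 h2; split => X Y pi cpi _.
  by move/(h1 _ _ _ cpi)/(h2 _ _ _ cpi).
by move/(h2 _ _ _ cpi)/(h1 _ _ _ cpi).
Qed.

Definition open_surjection {U X : topologicalType} (a : U -> X) : Prop :=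
  [/\ continuous a, Defs.surj a & forall A : set U, open A -> open (a @` A)].

Definition quotient_map {Y X : topologicalType} (p : Y -> X) : Prop :=
  forall A : set X, open (p @^-1` A) -> open A.

Lemma sop_splitP {X Y : topologicalType} (pi : Y -> X) :
  locally_split T_sop pi <-> exists (U : topologicalType) (a : U -> X) (rho : U -> Y),
    [/\ open_surjection a, continuous rho & pi \o rho = a].
Proof.
split => [[F [[i0 [_ ai0]] [rho /(_ i0) [crho rhoK]]]]|[U [a [rho [oa crho rhoK]]]]].
  by exists (fam_obj F i0), (fam_map F i0), (rho i0).
exact: (locally_split_singleton (single_with_singleton_family oa) crho rhoK).
Qed.

Lemma open_surjection_comp {A B C : topologicalType} (a : A -> B) (b : B -> C) :
  open_surjection a -> open_surjection b -> open_surjection (b \o a).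
Proof.
move=> [ca sa oa] [cb sb ob]; split.
- by move=> x; apply: continuous_comp; [exact: ca|exact: cb].
- by move=> z; have [y <-] := sb z; have [x <-] := sa y; exists x.
- by move=> S oS; rewrite -image_comp; apply: ob; exact: oa.
Qed.

Lemma open_surjection_pullback {Z U X : topologicalType} (f : Z -> X) (a : U -> X) :
  continuous f -> open_surjection a -> open_surjection (pullback_fst f a).
Proof.
move=> cf [ca sa oa]; split; first exact: pullback_fst_continuous.
  move=> z; have [u ua] := sa (f z).
  by exists (pullback_pair (esym ua)); exact: pullback_pair_fst.
move=> _ [B oB <-]; rewrite openE => z [p Bp <-].
have [[P Q] /= [nP nQ] PQB] : nbhs (set_val p) B by exact: open_nbhs_nbhs.
have aQ : nbhs (pullback_fst f a p) (f @^-1` (a @` Q°)).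
  apply: cf; apply: open_nbhs_nbhs; split; first by apply: oa; exact: open_interior.
  by exists (pullback_snd f a p); [exact: nQ|rewrite pullback_sq].
apply: filterS (filterI nP aQ) => z' [Pz' [u' Qu' au']].
exists (pullback_pair (esym au')); last exact: pullback_pair_fst.
by rewrite /= set_valE; apply: PQB; split => //; exact: interior_subset.
Qed.

Lemma quotient_of_factor {U Y X : topologicalType} (a : U -> X) (m : U -> Y)
    (p : Y -> X) :
  open_surjection a -> continuous m -> p \o m = a -> Defs.surj p /\ quotient_map p.
Proof.
move=> [ca sa oa] cm pmE; have pm u : p (m u) = a u by rewrite -pmE.
split.
  by move=> x; have [u <-] := sa x; exists (m u).
move=> A oA; have -> : A = a @` (m @^-1` (p @^-1` A)).
  apply/seteqP; split => [x Ax|_ [u Au <-]]; last by rewrite /= -pm.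
  by have [u ux] := sa x; exists u; rewrite //= pm ux.
by apply: oa; move/continuousP: cm; apply.
Qed.

Lemma effective_epi_quotient {Y X : topologicalType} (pi : Y -> X) :
  continuous pi -> Defs.surj pi -> quotient_map pi -> effective_epi pi.
Proof.
move=> cpi spi qpi P p1 p2 pb; have [_ _ p12 _] := pb.
split => // W g cg gp12.
have /choice [sec secK] := spi.
have gsecE y : g (sec (pi y)) = g y.
  have [p [<- <-]] := pullback_point pb (secK (pi y)).
  exact: (congr1 (fun k => k p) gp12).
exists (g \o sec); split.
- apply/continuousP => O oO; apply: qpi.
  rewrite (_ : _ @^-1` _ = g @^-1` O); first by move/continuousP: cg; apply.
  by apply/seteqP; split => y /=; rewrite gsecE.
- by apply/funext => y /=; exact: gsecE.
- by move=> h _ hpi; apply/funext => x /=; rewrite -{1}(secK x) -hpi.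
Qed.

Lemma effective_epi_of_sop_split {X Y : topologicalType} (pi : Y -> X) :
  continuous pi -> locally_split T_sop pi -> effective_epi pi.
Proof.
move=> cpi /sop_splitP [U [a [rho [oa crho rhoK]]]].
have [spi qpi] := quotient_of_factor oa crho rhoK.
exact: effective_epi_quotient.
Qed.

Lemma sop_split_pullback {Z Y X P : topologicalType} (f : Z -> X) (pi : Y -> X)
    (p1 : P -> Z) (p2 : P -> Y) :
  continuous f -> is_pullback f pi p1 p2 -> locally_split T_sop pi ->
  locally_split T_sop p1.
Proof.
move=> cf [_ _ _ univ] /sop_splitP [U [a [rho [oa crho rhoK]]]].
have crho2 : continuous (rho \o pullback_snd f a).
  by move=> w; apply: continuous_comp; [exact: pullback_snd_continuous|exact: crho].
have sq : f \o pullback_fst f a = pi \o (rho \o pullback_snd f a).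
  apply/funext => w /=; rewrite pullback_sq.
  exact: (esym (congr1 (fun k => k _) rhoK)).
have [m [cm m1 _ _]] := univ _ _ _ (@pullback_fst_continuous _ _ _ f a) crho2 sq.
apply/sop_splitP; exists (pullback f a), (pullback_fst f a), m; split => //.
exact: open_surjection_pullback.
Qed.

Lemma univ_eff_epi_of_sop_split {X Y : topologicalType} (pi : Y -> X) :
  continuous pi -> locally_split T_sop pi -> univ_eff_epi pi.
Proof.
move=> cpi sp; split => //; [exact: universalT|exact: effective_epi_of_sop_split|].
move=> Z P f p1 p2 cf pb; have [cp1 _ _ _] := pb.
by apply: effective_epi_of_sop_split cp1 _; exact: sop_split_pullback pb sp.
Qed.

Lemma subcanonical_of_sop_split (T : topology_on_Top) :
  (forall (X Y : topologicalType) (pi : Y -> X), continuous pi ->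
     locally_split T pi -> locally_split T_sop pi) -> subcanonical T.
Proof.
move=> Tsop X Y pi cpi _ /(Tsop _ _ _ cpi) sp.
apply: (@locally_split_singleton _ _ _ _ pi pi id) => // [|y]; last exact: cvg_id.
exact/single_with_singleton_family/univ_eff_epi_of_sop_split.
Qed.

Lemma subcanonical_of_local_sections (T : topology_on_Top) :
  (forall (X Y : topologicalType) (pi : Y -> X), continuous pi ->
     locally_split T pi -> has_local_sections pi) -> subcanonical T.
Proof.
move=> hT; apply: subcanonical_of_sop_split => X Y pi cpi /(hT _ _ _ cpi) ls.
by apply: (locally_splitS subtop_sutsu_sop); apply/sutsu_split_by_local_sections.
Qed.

Lemma local_top_sop : local_top T_sop.
Proof.
move=> X Y U V pi g f q cpi cg [_ cq sq _] _ /sop_splitP [U1 [b [rf [ob crf rfK]]]].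
move=> _ /sop_splitP [U2 [a [rg [oa crg rgK]]]]; split; first exact: universalT.
apply/sop_splitP; exists (pullback rg b), (a \o pullback_fst rg b),
  (q \o rf \o pullback_snd rg b); split.
- by apply: open_surjection_comp oa; exact: open_surjection_pullback.
- move=> w; apply: continuous_comp; first exact: pullback_snd_continuous.
  by apply: continuous_comp; [exact: crf|exact: cq].
- have sqE v : g (f v) = pi (q v) := congr1 (fun k => k v) sq.
  have rfE u : f (rf u) = b u := congr1 (fun k => k u) rfK.
  have rgE u : g (rg u) = a u := congr1 (fun k => k u) rgK.
  by apply/funext => w /=; rewrite -sqE rfE -pullback_sq rgE.
Qed.

Lemma section_cover_pullback {X Y U V : topologicalType} (pi : Y -> X) (g : U -> X)
    (f : V -> U) (q : V -> Y) {I K : Type} (W : I -> set X) (s : I -> X -> U)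
    (O : K -> set U) (t : K -> U -> V) :
  is_pullback g pi f q -> section_cover g W s -> section_cover f O t ->
  section_cover pi (fun ik : I * K => W ik.1 `&` s ik.1 @^-1` O ik.2)
    (fun ik => q \o t ik.2 \o s ik.1).
Proof.
move=> [_ cq sq _] [oW cW cs sK] [oO cO ct tK]; split.
- by move=> [i k]; exact: (proj1 (continuous_inP (s i) (oW i)) (cs i) _ (oO k)).
- by move=> x; have [i Wx] := cW x; have [k Os] := cO (s i x); exists (i, k).
- move=> [i k] x; rewrite inE => -[Wx Osx].
  apply: continuous_comp; first by apply: cs; rewrite inE.
  by apply: continuous_comp; [apply: ct; rewrite inE|exact: cq].
- move=> [i k] x [Wx Osx] /=.
  by rewrite -[LHS]/((pi \o q) _) -sq /= tK // sK.
Qed.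

Lemma local_top_split_by_local_sections (T : topology_on_Top) :
  split_by_local_sections T -> local_top T.
Proof.
move=> hT X Y U V pi g f q cpi cg pb _ lf _ lg; split; first exact: universalT.
have [cf _ _ _] := pb.
have [Wg [s sc]] := local_sections_cover ((hT _ _ _ cg).1 lg).
have [Wf [t tc]] := local_sections_cover ((hT _ _ _ cf).1 lf).
apply/(hT _ _ _ cpi).
exact: section_cover_local_sections (section_cover_pullback pb sc tc).
Qed.

Lemma filter_forall_In {T J : Type} (F : set_system T) {FF : Filter F} (s : seq J)
    (P : J -> set T) :
  (forall j, List.In j s -> F (P j)) -> F [set y | forall j, List.In j s -> P j y].
Proof.
elim: s => [|j s IH] FP; first by apply: filterS filterT => y _ ? [].
apply: filterS (filterI (FP j (or_introl erefl)) (IH (fun j' h => FP j' (or_intror h)))).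
by move=> y [Pj Ps] j' [<-|]; [|apply: Ps].
Qed.

Section dependent_pairs.
Context {J L : Type} (Ls : J -> seq L).

Lemma allpairs_pairE (sJ : seq J) :
  [seq (j, l) | j <- sJ, l <- Ls j] =
  List.flat_map (fun j => List.map (pair j) (Ls j)) sJ.
Proof. by elim: sJ => //= j sJ ->; elim: (Ls j) => //= l t ->. Qed.

Lemma In_allpairs_pair (sJ : seq J) j l :
  List.In (j, l) [seq (j, l) | j <- sJ, l <- Ls j] <-> List.In j sJ /\ List.In l (Ls j).
Proof.
rewrite allpairs_pairE List.in_flat_map.
split => [[j' [Hj' /List.in_map_iff [l' [[<- <-] Hl]]]]|[Hj Hl]] //.
by exists j; split => //; apply/List.in_map_iff; exists l.
Qed.

Lemma NoDup_allpairs_pair (sJ : seq J) :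
  List.NoDup sJ -> (forall j, List.NoDup (Ls j)) ->
  List.NoDup [seq (j, l) | j <- sJ, l <- Ls j].
Proof.
move=> + ndL; rewrite allpairs_pairE.
elim: sJ => [_|j sJ IH /List.NoDup_cons_iff [nj ndJ]] /=; first exact: List.NoDup_nil.
apply: List.NoDup_app; [|exact: IH|].
  by apply: List.NoDup_map_NoDup_ForallPairs => // a b _ _ [].
move=> _ /List.in_map_iff [l [<- _]] /List.in_flat_map [j' [Hj' /List.in_map_iff]].
by move=> [l' [[ej' _] _]]; apply: nj; rewrite -ej'.
Qed.

End dependent_pairs.

Section numerable_preimage.
Context {X U : topologicalType} {I K J L : Type}.
Variables (V : I -> set X) (s : I -> X -> U) (O : K -> set U).
Variables (phi : J -> X -> Rdefinitions.R) (psi : L -> U -> Rdefinitions.R).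
Variables (c : J -> I) (k : L -> K).

Local Notation supp f := (closure [set x | f x != 0]).

Hypothesis s_continuous : forall i, {in V i, continuous (s i)}.
Hypothesis phi_continuous : forall j, continuous (phi j).
Hypothesis psi_continuous : forall l, continuous (psi l).
Hypothesis phi_bound : forall j x, 0 <= phi j x <= 1.
Hypothesis psi_bound : forall l u, 0 <= psi l u <= 1.
Hypothesis phi_sub : forall j, supp (phi j) `<=` V (c j).
Hypothesis psi_sub : forall l, supp (psi l) `<=` O (k l).
Hypothesis phi_locally_finite : forall x : X, exists N : set X, nbhs x N /\
  exists sJ : seq J, forall j, ~ List.In j sJ -> N `&` supp (phi j) = set0.
Hypothesis psi_locally_finite : forall u : U, exists N : set U, nbhs u N /\
  exists sL : seq L, forall l, ~ List.In l sL -> N `&` supp (psi l) = set0.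
Hypothesis phi_sum : forall x : X, exists sJ : seq J,
  [/\ List.NoDup sJ, (forall j, phi j x != 0 -> List.In j sJ) &
      \sum_(j <- sJ) phi j x = 1].
Hypothesis psi_sum : forall u : U, exists sL : seq L,
  [/\ List.NoDup sL, (forall l, psi l u != 0 -> List.In l sL) &
      \sum_(l <- sL) psi l u = 1].

(* [s (c j)] is arbitrary off [V (c j)], but there [phi j] vanishes near every point. *)
Definition prod_partition (jl : J * L) (x : X) : Rdefinitions.R :=
  phi jl.1 x * psi jl.2 (s (c jl.1) x).

Lemma prod_partition_neq0 j l x :
  prod_partition (j, l) x != 0 = (phi j x != 0) && (psi l (s (c j) x) != 0).
Proof. by rewrite /prod_partition mulf_eq0 negb_or. Qed.

Lemma supp_prod_partition_phi j l : supp (prod_partition (j, l)) `<=` supp (phi j).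
Proof. by apply: closureS => x; rewrite /= prod_partition_neq0 => /andP[]. Qed.

Lemma not_supp_phi j x : ~ V (c j) x -> nbhs x (~` [set y | phi j y != 0]).
Proof. by move=> nVx; rewrite -[nbhs _ _]/(_° x) interiorC => /phi_sub. Qed.

Lemma supp_prod_partition j l y : supp (prod_partition (j, l)) y ->
  V (c j) y /\ supp (psi l) (s (c j) y).
Proof.
move=> Py; have Vy : V (c j) y by apply/phi_sub/(supp_prod_partition_phi Py).
split => // N /(s_continuous (mem_set Vy)) /Py [z [Pz Nz]].
by exists (s (c j) z); split => //; move: Pz; rewrite /= prod_partition_neq0 => /andP[].
Qed.

Lemma prod_partition_continuous jl : continuous (prod_partition jl).
Proof.
case: jl => j l x; have [Vx|nVx] := pselect (V (c j) x).
  apply: (@continuousM _ _ (phi j) (psi l \o s (c j))); first exact: phi_continuous.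
  by apply: continuous_comp; [exact: s_continuous (mem_set Vx)|exact: psi_continuous].
have Phi0 : \forall y \near x, prod_partition (j, l) y = 0.
  apply: filterS (not_supp_phi nVx) => y /= /negP.
  by rewrite negbK /prod_partition => /eqP ->; rewrite mul0r.
exact: near_cst_continuous Phi0.
Qed.

Lemma prod_partition_bound jl x : 0 <= prod_partition jl x <= 1.
Proof.
case: jl => j l; have /andP [p0 p1] := phi_bound j x.
have /andP [q0 q1] := psi_bound l (s (c j) x).
by rewrite /prod_partition mulr_ge0 //= mulr_ile1.
Qed.

Lemma prod_partition_sub jl : exists ik : I * K,
  supp (prod_partition jl) `<=` V ik.1 `&` s ik.1 @^-1` O ik.2.
Proof.
case: jl => j l; exists (c j, k l) => y /supp_prod_partition [Vy Py].
by split => //; exact: psi_sub.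
Qed.

Lemma prod_partition_locally_finite_in j (x : X) : exists NL : set X * seq L,
  nbhs x NL.1 /\
  forall l, ~ List.In l NL.2 -> NL.1 `&` supp (prod_partition (j, l)) = set0.
Proof.
have [Vx|nVx] := pselect (V (c j) x).
  have [N [nN [sL hsL]]] := psi_locally_finite (s (c j) x).
  exists (s (c j) @^-1` N, sL); split; first exact: s_continuous (mem_set Vx) _ nN.
  move=> l nl; apply/seteqP; split => // y [/= Ny /supp_prod_partition [_ Py]].
  have : (N `&` supp (psi l)) (s (c j) y) by split.
  by rewrite hsL.
exists (~` supp (phi j), [::]); split.
  apply: open_nbhs_nbhs; split; first exact/closed_openC/closed_closure.
  by move/phi_sub.
by move=> l _; apply/seteqP; split => // y [ny /supp_prod_partition_phi].
Qed.

Lemma prod_partition_locally_finite (x : X) : exists N : set X, nbhs x N /\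
  exists s' : seq (J * L), forall jl, ~ List.In jl s' ->
    N `&` supp (prod_partition jl) = set0.
Proof.
have [N [nN [sJ hsJ]]] := phi_locally_finite x.
have /choice [M hM] := prod_partition_locally_finite_in ^~ x.
exists (N `&` [set y | forall j, List.In j sJ -> (M j).1 y]); split.
  by apply: filterI nN _; apply: filter_forall_In => j _; case: (hM j).
exists [seq (j, l) | j <- sJ, l <- (M j).2] => -[j l] njl.
apply/seteqP; split => // y [[Ny My] Py].
have [Hj|nj] := pselect (List.In j sJ).
  have nl : ~ List.In l (M j).2 by move=> Hl; apply: njl; apply/In_allpairs_pair.
  have : ((M j).1 `&` supp (prod_partition (j, l))) y by split => //; exact: My.
  by case: (hM j) => _ ->.
have : (N `&` supp (phi j)) y by split => //; exact: supp_prod_partition_phi Py.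
by rewrite hsJ.
Qed.

Lemma prod_partition_sum (x : X) : exists s' : seq (J * L),
  [/\ List.NoDup s', (forall jl, prod_partition jl x != 0 -> List.In jl s') &
      \sum_(jl <- s') prod_partition jl x = 1].
Proof.
have [sJ [ndJ inJ sumJ]] := phi_sum x.
have /choice [sL hsL] := fun j => psi_sum (s (c j) x).
exists [seq (j, l) | j <- sJ, l <- sL j]; split.
- by apply: NoDup_allpairs_pair => // j; case: (hsL j).
- move=> [j l]; rewrite prod_partition_neq0 => /andP [nj nl].
  by apply/In_allpairs_pair; split; [exact: inJ|case: (hsL j) => _ + _; apply].
- rewrite big_allpairs_dep -[RHS]sumJ; apply: eq_bigr => j _.
  by rewrite /prod_partition /= -mulr_sumr; case: (hsL j) => _ _ ->; rewrite mulr1.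
Qed.

Lemma numerable_prod_partition :
  numerable (fun ik : I * K => V ik.1 `&` s ik.1 @^-1` O ik.2).
Proof.
exists (J * L)%type, prod_partition; split.
- exact: prod_partition_continuous.
- exact: prod_partition_bound.
- exact: prod_partition_sub.
- exact: prod_partition_locally_finite.
- exact: prod_partition_sum.
Qed.

End numerable_preimage.

Lemma numerable_preimage {X U : topologicalType} {I K : Type} (V : I -> set X)
    (s : I -> X -> U) (O : K -> set U) :
  (forall i, {in V i, continuous (s i)}) -> numerable V -> numerable O ->
  numerable (fun ik : I * K => V ik.1 `&` s ik.1 @^-1` O ik.2).
Proof.
move=> cs [J [phi [cphi bphi /choice [c sphi] lfphi sumphi]]].
move=> [L [psi [cpsi bpsi /choice [k spsi] lfpsi sumpsi]]].
exact: (numerable_prod_partition cs cphi cpsi bphi bpsi sphi spsi lfphi lfpsi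
  sumphi sumpsi).
Qed.

Lemma nop_split_of_section_cover {X Y : topologicalType} (pi : Y -> X) {I : Type}
    (V : I -> set X) (s : I -> X -> Y) :
  section_cover pi V s -> numerable V -> locally_split T_nop pi.
Proof.
move=> sc nV; have [oV cV _ _] := sc.
exists (subspace_family V); split; last exact: section_cover_split sc.
split; first exact: op_subspace_family.
rewrite (_ : (fun i => _) = V) //; apply/funext => i.
exact: (range_set_val (V i)).
Qed.

Lemma local_top_nop : local_top T_nop.
Proof.
move=> X Y U V pi g f q cpi cg pb _ [F [[TF nF] [rf hrf]]] _ [G [[TG nG] [rg hrg]]].
split; first exact: universalT.
have [t tc] := section_cover_of_op_split TF hrf.
have [s sc] := section_cover_of_op_split TG hrg.
apply: nop_split_of_section_cover (section_cover_pullback pb sc tc) _.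
by apply: numerable_preimage nG nF; case: sc.
Qed.

Theorem mainTheorem15 :
  subtop T_nop T_op /\
  (prec T_op T_slh /\ simtop T_op T_slh) /\
  (subtop T_slh T_sutsu /\ simtop T_slh T_sutsu) /\
  (subtop T_sutsu T_lsplit /\ simtop T_sutsu T_lsplit) /\
  subtop T_lsplit T_sur /\
  (subtop T_sutsu T_sop /\ subtop T_sop T_sur) /\
  (forall T, List.In T [:: T_nop; T_op; T_slh; T_sutsu; T_sop; T_lsplit; T_sur] ->
     singleton_top T \/ singletonizable T) /\
  superextensive T_op /\
  (forall T, List.In T [:: T_nop; T_op; T_slh; T_sutsu; T_sop; T_lsplit] ->
     subcanonical T /\ local_top T).
Proof.
have op_slh := simtop_split_by_local_sections op_split_by_local_sections
  slh_split_by_local_sections.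
have by_sections T : split_by_local_sections T -> subcanonical T /\ local_top T.
  move=> hT; split; last exact: local_top_split_by_local_sections.
  by apply: subcanonical_of_local_sections => X Y pi cpi /(hT _ _ _ cpi).
split; first exact: subtop_nop_op.
split; first by split; [exact: op_slh.1|].
split; first by split; [exact: subtop_slh_sutsu|exact: simtop_split_by_local_sections
  slh_split_by_local_sections sutsu_split_by_local_sections].
split; first by split; [exact: subtop_sutsu_lsplit|exact: simtop_split_by_local_sections
  sutsu_split_by_local_sections lsplit_split_by_local_sections].
split; first exact: subtop_lsplit_sur.
split; first by split; [exact: subtop_sutsu_sop|exact: subtop_sop_sur].
split; first by move=> T _; right; exact: singletonizableT.
split; first exact: superextensive_op.
move=> T /= [<-|[<-|[<-|[<-|[<-|[<-|[]]]]]]].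
- split; last exact: local_top_nop.
  apply: subcanonical_of_local_sections => X Y pi cpi /(locally_splitS subtop_nop_op).
  by move/(op_split_by_local_sections cpi).
- exact: by_sections op_split_by_local_sections.
- exact: by_sections slh_split_by_local_sections.
- exact: by_sections sutsu_split_by_local_sections.
- by split; [exact: subcanonical_of_sop_split|exact: local_top_sop].
- exact: by_sections lsplit_split_by_local_sections.
Qed.
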